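(* Let $H$ be a Hilbert space, $(Y,\|\cdot\|_Y)$ a Banach space, $f:H\to Y$ locally Lipschitz, and $K\subset H$ compact. Then there exist $n_0\in\mathbb{N}$ and a constant $c(f,K)\ge0$ such that for every $n\ge n_0$ there is an $n$-dimensional linear subspace $E_n\subset H$ with $$\sup_{x\in K}\|f(x)-f(\pi_{E_n}(x))\|_Y\le c(f,K)\,\Omega_n(K,H),$$ where $\pi_{E_n}$ is the orthogonal projection onto $E_n$.
   Context: The Kolmogorov $n$-width is $\Omega_n(K,H)=\inf_{\dim E=n}\sup_{u\in K}\inf_{v\in E}\|u-v\|$, the infimum over $n$-dimensional linear subspaces $E\subset H$. *)

From HB Require Import structures.
From mathcomp Require Import all_boot all_order all_algebra.
From mathcomp Require Import all_classical all_reals all_analysis.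
Set Implicit Arguments. Unset Strict Implicit. Unset Printing Implicit Defensive.
Import Order.TTheory GRing.Theory Num.Theory.
Import numFieldNormedType.Exports.
Local Open Scope classical_set_scope.
Local Open Scope ring_scope.

Section Defs.
Context {R : realType} {V : normedModType R}.

Definition inner_product_of_norm (ip : V -> V -> R) : Prop :=
  [/\ forall x y, ip x y = ip y x,
      forall a x y z, ip (a *: x + y) z = a * ip x z + ip y z
    & forall x, ip x x = `|x| ^+ 2].

Definition span (n : nat) (e : 'I_n -> V) : set V :=
  [set \sum_(i < n) c i *: e i | c in [set: 'I_n -> R]].

Definition lin_indep (n : nat) (e : 'I_n -> V) : Prop :=
  forall c : 'I_n -> R, \sum_(i < n) c i *: e i = 0 -> forall i, c i = 0.

Definition subspace_dim (n : nat) (E : set V) : Prop :=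
  exists e : 'I_n -> V, lin_indep e /\ E = span e.

(* orthogonal projection onto E (w.r.t. ip): the point y of E with x - y
   orthogonal to E (unique and existing when E is finite dimensional) *)
Definition orth_proj (ip : V -> V -> R) (E : set V) (x : V) : V :=
  xget 0 [set y | E y /\ forall z, E z -> ip (x - y) z = 0].

Definition kolmogorov_width (n : nat) (K : set V) : \bar R :=
  ereal_inf [set ereal_sup [set ereal_inf [set (`|u - v|)%:E | v in E]
                                | u in K]
            | E in [set E | subspace_dim n E]].

End Defs.

Definition locally_lipschitz {R : realType} {V W : normedModType R}
  (f : V -> W) : Prop :=
  forall x : V, exists r : R, 0 < r /\ exists L : R,
    forall y z, ball x r y -> ball x r z -> `|f y - f z| <= L * `|y - z|.

(* If K lies in the span of finitely many vectors, the orthogonal projection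
   onto any n-dimensional subspace containing them fixes K pointwise, and
   c = 0 works.  Otherwise K contains n + 1 independent vectors for every n,
   and a biorthogonal system shows that the n-width of K is positive.
   Compactness gives |f y - f z| <= L |y - z| whenever y is in K and
   |y - z| < d, and bounds the n-width by d / 2 once n exceeds the
   size of a (d / 2)-net of K.  Picking an n-dimensional E that approximates
   K within twice the width, and using that the orthogonal projection attains
   the distance to E, gives |f x - f (P x)| <= L |x - P x| <= 2 L Omega_n(K). *)

From Pilot Require Import Defs.
From HB Require Import structures.
From mathcomp Require Import all_boot all_order all_algebra.
From mathcomp Require Import all_classical all_reals all_analysis.
From mathcomp Require Import ring lra.
From mathcomp Require finmap.
Import Order.TTheory GRing.Theory Num.Theory.
Import numFieldNormedType.Exports.
Local Open Scope classical_set_scope.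
Local Open Scope ring_scope.

Set Implicit Arguments. Unset Strict Implicit. Unset Printing Implicit Defensive.

Local Notation span := Pilot.Defs.span.

Section Span.
Context {R : realType} {V : normedModType R}.

Lemma span0 n (e : 'I_n -> V) : span e 0.
Proof. by exists (fun=> 0) => //; rewrite big1 // => i _; rewrite scale0r. Qed.

Lemma spanD n (e : 'I_n -> V) x y : span e x -> span e y -> span e (x + y).
Proof.
move=> [c _ <-] [d _ <-]; exists (fun i => c i + d i) => //.
by rewrite -big_split /=; apply: eq_bigr => i _; rewrite scalerDl.
Qed.

Lemma spanZ n (e : 'I_n -> V) a x : span e x -> span e (a *: x).
Proof.
move=> [c _ <-]; exists (fun i => a * c i) => //.
by rewrite scaler_sumr; apply: eq_bigr => i _; rewrite scalerA.
Qed.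

Lemma spanB n (e : 'I_n -> V) x y : span e x -> span e y -> span e (x - y).
Proof. by move=> ex ey; rewrite -scaleN1r; apply/spanD/spanZ. Qed.

Lemma span_vec n (e : 'I_n -> V) i : span e (e i).
Proof.
exists (fun j => (j == i)%:R) => //.
rewrite (bigD1 i) //= eqxx scale1r big1 ?addr0 // => j /negbTE ->.
by rewrite scale0r.
Qed.

Lemma span_lincomb n (e : 'I_n -> V) m (c : 'I_m -> R) (v : 'I_m -> V) :
  (forall i, span e (v i)) -> span e (\sum_(i < m) c i *: v i).
Proof.
move=> ev; elim/big_rec: _ => [|i y _ ey]; first exact: span0.
exact/spanD/ey/spanZ.
Qed.

Lemma span_subset n (e : 'I_n -> V) m (v : 'I_m -> V) :
  (forall i, span e (v i)) -> span v `<=` span e.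
Proof. by move=> ev x [c _ <-]; apply: span_lincomb. Qed.

(* Steinitz: the coordinate matrix of [u] in [v] has full row rank. *)
Lemma lin_indep_leq_span m (u : 'I_m -> V) j (v : 'I_j -> V) :
  lin_indep u -> (forall i, span v (u i)) -> (m <= j)%N.
Proof.
move=> indep_u uv.
have [C defu] : {C : 'I_m -> 'I_j -> R & forall i, u i = \sum_l C i l *: v l}.
  apply: (@choice _ _ (fun i c => u i = \sum_l c l *: v l)) => i.
  by have [c _ <-] := uv i; exists c.
pose M : 'M[R]_(m, j) := \matrix_(i, l) C i l.
suff free_M : row_free M by rewrite -row_leq_rank in free_M; exact: leq_trans (rank_leq_col M).
apply: inj_row_free => c cM0; apply/matrixP => a i; rewrite ord1 mxE.
move: i; apply: indep_u.
under eq_bigr do rewrite defu scaler_sumr.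
rewrite exchange_big big1 //= => l _.
have cMl : \sum_i c 0 i * C i l = 0.
  transitivity ((c *m M) 0 l); last by rewrite cM0 mxE.
  by rewrite mxE; apply: eq_bigr => i _; rewrite mxE.
by under eq_bigr do rewrite scalerA; rewrite -scaler_suml cMl scale0r.
Qed.

Definition ord_rcons j (b : 'I_j -> V) (w : V) : 'I_j.+1 -> V :=
  fun i => if unlift ord_max i is Some k then b k else w.

Lemma ord_rcons_lift j (b : 'I_j -> V) w k : ord_rcons b w (lift ord_max k) = b k.
Proof. by rewrite /ord_rcons liftK. Qed.

Lemma ord_rcons_max j (b : 'I_j -> V) w : ord_rcons b w ord_max = w.
Proof. by rewrite /ord_rcons unlift_none. Qed.

Lemma span_ord_rcons j (b : 'I_j -> V) w : span b `<=` span (ord_rcons b w).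
Proof. by apply: span_subset => i; rewrite -(ord_rcons_lift b w); apply: span_vec. Qed.

Lemma span_ord_rcons_max j (b : 'I_j -> V) w : span (ord_rcons b w) w.
Proof. by rewrite -{2}(ord_rcons_max b w); apply: span_vec. Qed.

Lemma lin_indep_ord_rcons j (b : 'I_j -> V) w :
  lin_indep b -> ~ span b w -> lin_indep (ord_rcons b w).
Proof.
move=> indep_b bw c; rewrite big_ord_recr /= ord_rcons_max.
have lift_widen i : widen_ord (leqnSn j) i = lift ord_max i.
  by apply: val_inj; rewrite [RHS]lift_max.
under eq_bigr do rewrite lift_widen ord_rcons_lift.
set S := \sum_(i < j) _ => Sw0.
have cmax0 : c ord_max = 0.
  apply: contra_notP bw => /eqP cmax.
  have cwS : c ord_max *: w = - S by apply/eqP; rewrite -addr_eq0 addrC Sw0.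
  have -> : w = (- (c ord_max)^-1) *: S.
    by rewrite scaleNr -scalerN -cwS scalerA mulVf ?scale1r.
  exact/spanZ/span_lincomb/span_vec.
rewrite cmax0 scale0r addr0 in Sw0.
by move=> i; case: (unliftP ord_max i) => [k ->|->] //; exact: indep_b Sw0 k.
Qed.

Lemma exists_basis_of_span m (v : 'I_m -> V) :
  exists j (b : 'I_j -> V), [/\ (j <= m)%N, lin_indep b & forall i, span b (v i)].
Proof.
elim: m v => [|m IH] v.
  exists 0%N, v; split => //; last by case.
  by move=> c _ [].
have [j [b [jm indep_b vb]]] := IH (fun i => v (lift ord_max i)).
have [bvmax|bvmax] := pselect (span b (v ord_max)).
  exists j, b; split => [||i]; [exact: leqW | by [] |].
  by case: (unliftP ord_max i) => [k ->|->].
exists j.+1, (ord_rcons b (v ord_max)); split => //; first exact: lin_indep_ord_rcons.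
move=> i; case: (unliftP ord_max i) => [k ->|->]; last exact: span_ord_rcons_max.
exact/span_ord_rcons/vb.
Qed.

Lemma lin_indep_in (S : set V) :
  ~ (exists m (v : 'I_m -> V), S `<=` span v) ->
  forall j, exists u : 'I_j -> V, lin_indep u /\ forall i, S (u i).
Proof.
move=> S_inf; elim => [|j [u [indep_u Su]]].
  by exists (fun=> 0); split => [c _ []|[]].
have [w [Sw uw]] : exists w, S w /\ ~ span u w.
  apply: contrapT => noW; apply: S_inf; exists j, u => w Sw.
  by apply: contrapT => uw; apply: noW; exists w.
exists (ord_rcons u w); split; first exact: lin_indep_ord_rcons.
by move=> i; case: (unliftP ord_max i) => [k ->|->]; rewrite ?ord_rcons_lift ?ord_rcons_max.
Qed.

Section UnboundedDimension.
Hypothesis dim_unbounded : forall n, exists E : set V, subspace_dim n E.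

Lemma span_proper j (b : 'I_j -> V) : exists w, ~ span b w.
Proof.
have [_ [e [indep_e _]]] := dim_unbounded j.+1.
apply/existsNP => span_all.
by have := lin_indep_leq_span indep_e (fun i => span_all (e i)); rewrite ltnn.
Qed.

Lemma lin_indep_extend k j (b : 'I_j -> V) :
  lin_indep b -> exists E, subspace_dim (j + k) E /\ span b `<=` E.
Proof.
elim: k j b => [|k IH] j b indep_b.
  by exists (span b); rewrite addn0; split => //; exists b.
have [w bw] := span_proper b.
have [E [dimE sub]] := IH _ _ (lin_indep_ord_rcons indep_b bw).
by exists E; rewrite -addSnnS; split => // x /span_ord_rcons/sub.
Qed.

Lemma subspace_dim_supset m (v : 'I_m -> V) n :
  (m <= n)%N -> exists E, subspace_dim n E /\ span v `<=` E.
Proof.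
move=> mn; have [j [b [jm indep_b vb]]] := exists_basis_of_span v.
have [E [dimE sub]] := lin_indep_extend (n - j) indep_b.
rewrite subnKC in dimE; last exact: leq_trans mn.
by exists E; split => // x /(span_subset vb)/sub.
Qed.

End UnboundedDimension.

End Span.

Section InnerProduct.
Context {R : realType} {V : normedModType R} (ip : V -> V -> R).
Hypothesis ip_norm : inner_product_of_norm ip.

Lemma ipC x y : ip x y = ip y x. Proof. by case: ip_norm. Qed.

Lemma ipxx x : ip x x = `|x| ^+ 2. Proof. by case: ip_norm. Qed.

Lemma ipDl x y z : ip (x + y) z = ip x z + ip y z.
Proof. by case: ip_norm => _ ipL _; rewrite -{1}[x]scale1r ipL mul1r. Qed.

Lemma ip0l z : ip 0 z = 0.
Proof. by have := ipDl 0 0 z; rewrite addr0; lra. Qed.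

Lemma ipZl a x z : ip (a *: x) z = a * ip x z.
Proof. by case: ip_norm => _ ipL _; rewrite -[a *: x]addr0 ipL ip0l addr0. Qed.

Lemma ipBl x y z : ip (x - y) z = ip x z - ip y z.
Proof. by rewrite ipDl -scaleN1r ipZl mulN1r. Qed.

Lemma ipDr x y z : ip z (x + y) = ip z x + ip z y.
Proof. by rewrite ipC ipDl !(ipC z). Qed.

Lemma ip0r z : ip z 0 = 0.
Proof. by rewrite ipC ip0l. Qed.

Lemma ipZr a x z : ip z (a *: x) = a * ip z x.
Proof. by rewrite ipC ipZl ipC. Qed.

Lemma ipNr x z : ip z (- x) = - ip z x.
Proof. by rewrite -scaleN1r ipZr mulN1r. Qed.

Lemma ip_lincombl n (c : 'I_n -> R) (e : 'I_n -> V) z :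
  ip (\sum_(i < n) c i *: e i) z = \sum_(i < n) c i * ip (e i) z.
Proof.
elim/big_rec2: _ => [|i y1 y2 _ <-]; first exact: ip0l.
by rewrite ipDl ipZl.
Qed.

Lemma ip_lincombr n (c : 'I_n -> R) (e : 'I_n -> V) z :
  ip z (\sum_(i < n) c i *: e i) = \sum_(i < n) c i * ip z (e i).
Proof. by rewrite ipC ip_lincombl; under eq_bigr do rewrite ipC. Qed.

Lemma ipxx_eq0 x : ip x x = 0 -> x = 0.
Proof. by rewrite ipxx => /eqP; rewrite sqrf_eq0 normr_eq0 => /eqP. Qed.

Lemma normD_sqr x y : `|x + y| ^+ 2 = `|x| ^+ 2 + 2 * ip x y + `|y| ^+ 2.
Proof. by rewrite -!ipxx ipDl !ipDr (ipC y x); ring. Qed.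

(* Cauchy-Schwarz from the polarization identity and the triangle inequality. *)
Lemma ip_le_norm x y : ip x y <= `|x| * `|y|.
Proof.
have polar : 4 * ip x y = `|x + y| ^+ 2 - `|x - y| ^+ 2.
  by rewrite !normD_sqr normrN ipNr; ring.
have le_sum : `|x + y| ^+ 2 <= (`|x| + `|y|) ^+ 2.
  by rewrite ler_sqr ?nnegrE ?addr_ge0 // ler_normD.
have le_diff : (`|x| - `|y|) ^+ 2 <= `|x - y| ^+ 2.
  by rewrite -real_normK ?num_real // ler_sqr ?nnegrE // ler_dist_dist.
nra.
Qed.

Lemma normr_ip_le x y : `|ip x y| <= `|x| * `|y|.
Proof.
rewrite ler_norml ip_le_norm andbT lerNl -ipNr -(normrN y).
exact: ip_le_norm.
Qed.

Lemma ip_span_eq0 x n (e : 'I_n -> V) z :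
  (forall i, ip x (e i) = 0) -> span e z -> ip x z = 0.
Proof.
by move=> xe [c _ <-]; rewrite ip_lincombr big1 // => i _; rewrite xe mulr0.
Qed.

Lemma orth_proj_exists n (e : 'I_n -> V) x :
  exists y, span e y /\ forall z, span e z -> ip (x - y) z = 0.
Proof.
elim: n e x => [|n IH] e x.
  exists 0; split=> [|z [c _ <-]]; first exact: span0.
  by rewrite big_ord0 ip0r.
have -> : e = ord_rcons (e \o lift ord_max) (e ord_max).
  by apply: funext => i; case: (unliftP ord_max i) => [k ->|->];
    rewrite ?ord_rcons_lift ?ord_rcons_max.
move: (e \o _) (e ord_max) => b w.
have [p [bp xp_b]] := IH b x.
have [q [bq wq_b]] := IH b w.
pose r := w - q.
(* If [r = 0] the coefficient is [0 / 0 = 0], so [y = p]. *)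
pose y := p + (ip (x - p) r / ip r r) *: r.
have xy_b z : span b z -> ip (x - y) z = 0.
  move=> bz; rewrite opprD addrA (ipBl (x - p)) ipZl (xp_b z bz) (wq_b z bz).
  by rewrite mulr0 subr0.
have xy_r : ip (x - y) r = 0.
  rewrite opprD addrA (ipBl (x - p)) ipZl.
  have [rr0|rr_neq0] := eqVneq (ip r r) 0; last by rewrite mulfVK // subrr.
  by rewrite (ipxx_eq0 rr0) ip0r !mul0r subr0.
exists y; split.
  apply/spanD/spanZ/spanB; first exact: span_ord_rcons bp.
    exact: span_ord_rcons_max.
  exact: span_ord_rcons bq.
move=> z; apply: ip_span_eq0 => i; case: (unliftP ord_max i) => [k ->|->].
  by rewrite ord_rcons_lift xy_b //; apply: span_vec.
by rewrite ord_rcons_max -(subrK q w) ipDr xy_r xy_b ?add0r.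
Qed.

Lemma orth_projP n (e : 'I_n -> V) x :
  span e (orth_proj ip (span e) x) /\
  forall z, span e z -> ip (x - orth_proj ip (span e) x) z = 0.
Proof. exact: xgetPex (orth_proj_exists e x). Qed.

Lemma orth_proj_dist_le n (e : 'I_n -> V) x v :
  span e v -> `|x - orth_proj ip (span e) x| <= `|x - v|.
Proof.
move=> ev; have [ey xy_e] := orth_projP e x.
set y := orth_proj _ _ x in ey xy_e *.
have ye_v : span e (y - v) by apply: spanB.
have := normD_sqr (x - y) (y - v); rewrite xy_e // mulr0 addr0 addrA subrK.
by move=> pythagoras; rewrite -ler_sqr ?nnegrE // pythagoras lerDl sqr_ge0.
Qed.

Lemma orth_proj_id n (e : 'I_n -> V) x : span e x -> orth_proj ip (span e) x = x.
Proof.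
move=> /(orth_proj_dist_le x); rewrite subrr normr0 normr_le0 subr_eq0.
by move=> /eqP.
Qed.

Lemma dist_span_orth_proj n (e : 'I_n -> V) x :
  ereal_inf [set (`|x - v|)%:E | v in span e] = (`|x - orth_proj ip (span e) x|)%:E.
Proof.
apply/eqP; rewrite eq_le; apply/andP; split.
  by apply: ereal_inf_lbound; exists (orth_proj ip (span e) x) => //; case: (orth_projP e x).
by apply: le_ereal_inf_tmp => _ [v ev <-]; rewrite lee_fin orth_proj_dist_le.
Qed.

Lemma lin_indep_not_span_lift m (u : 'I_m.+1 -> V) i :
  lin_indep u -> ~ span (u \o lift i) (u i).
Proof.
move=> indep_u [c _ uiE].
pose d j := if unlift i j is Some k then c k else -1.
suff /indep_u/(_ i)/eqP : \sum_j d j *: u j = 0.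
  by rewrite /d unlift_none oppr_eq0 oner_eq0.
rewrite (bigD1_ord i) //= /d unlift_none.
by under eq_bigr do rewrite liftK; rewrite uiE scaleN1r addNr.
Qed.

Lemma biorthogonal_exists m (u : 'I_m.+1 -> V) :
  lin_indep u -> forall i, exists w, forall j, ip (u j) w = (j == i)%:R.
Proof.
move=> indep_u i.
have [y [uy ui_y]] := orth_proj_exists (u \o lift i) (u i).
pose r := u i - y.
have rr_neq0 : ip r r != 0.
  apply: contra_notN (lin_indep_not_span_lift (i := i) indep_u) => /eqP/ipxx_eq0/eqP.
  by rewrite subr_eq0 => /eqP ->.
exists ((ip r r)^-1 *: r) => j; rewrite ipZr.
case: (unliftP i j) => [k ->|->].
  have r_uk : ip r (u (lift i k)) = 0 by apply/ui_y/(@span_vec _ _ _ (u \o lift i)).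
  by rewrite eq_sym (negbTE (neq_lift i k)) (ipC (u _)) r_uk mulr0.
have ui_r : ip (u i) r = ip r r.
  by rewrite -{1}(subrK y (u i)) ipDl (ipC y) (ui_y y uy) addr0.
by rewrite eqxx ui_r mulVf.
Qed.

(* Let [W] be biorthogonal to [u].  If each [u i] were within [eta] of some
   [P i] in the [m]-dimensional [span e], a nontrivial relation [a] among the
   [P i] would give [a i = ip (\sum_j a j *: (u j - P j)) (W i)], hence
   [\sum |a i| <= eta * \sum |a i| * \sum |W i|]: impossible for
   [eta < 1 / \sum |W i|]. *)
Lemma lin_indep_far_from_span m (u : 'I_m.+1 -> V) : lin_indep u ->
  exists2 eta : R, 0 < eta & forall e : 'I_m -> V,
    exists i, forall v, span e v -> eta <= `|u i - v|.
Proof.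
move=> indep_u; have [W uW] := choice (biorthogonal_exists indep_u).
pose Ws := \sum_i `|W i|.
have Ws_ge0 : 0 <= Ws by apply: sumr_ge0.
exists (Ws + 1)^-1 => [|e]; first by rewrite invr_gt0 ltr_wpDl.
apply: contrapT => far.
have /choice[P uP] : forall i, exists v, span e v /\ `|u i - v| < (Ws + 1)^-1.
  move=> i; apply: contrapT => near; apply: far; exists i => v ev.
  by rewrite leNgt; apply/negP => uv; apply: near; exists v.
have : ~ lin_indep P.
  by move=> /lin_indep_leq_span/(_ (fun i => (uP i).1)); rewrite ltnn.
move=> /existsNP[a /not_implyP[Pa0 /existsNP[i0 ai0]]].
pose D := \sum_j a j *: (u j - P j).
have aE i : a i = ip D (W i).
  have -> : D = \sum_j a j *: u j.
    by rewrite /D; under eq_bigr do rewrite scalerBr; rewrite sumrB Pa0 subr0.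
  rewrite ip_lincombl (bigD1 i) //= uW eqxx mulr1 big1 ?addr0 // => j /negbTE ji.
  by rewrite uW ji mulr0.
pose S := \sum_i `|a i|.
have S_gt0 : 0 < S.
  have ai0_gt0 : 0 < `|a i0| by rewrite normr_gt0; apply/eqP.
  by apply: lt_le_trans ai0_gt0 _; rewrite /S (bigD1 i0) //= lerDl sumr_ge0.
have S_le : S <= `|D| * Ws.
  by rewrite /S /Ws mulr_sumr; apply: ler_sum => i _; rewrite aE normr_ip_le.
have D_le : `|D| * (Ws + 1) <= S.
  rewrite -ler_pdivlMr ?ltr_wpDl // /D /S mulr_suml.
  apply: le_trans (ler_norm_sum _ _ _) _; apply: ler_sum => j _.
  by rewrite normrZ ler_wpM2l // ltW // (uP j).2.
have D0 : `|D| = 0.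
  by apply/eqP; rewrite eq_le normr_ge0 andbT; rewrite mulrDr mulr1 in D_le; lra.
by move: S_le; rewrite D0 mul0r; lra.
Qed.

End InnerProduct.

Section Compact.
Context {R : realType} {V W : normedModType R}.

Lemma compact_finite_net (K : set V) (r : R) : compact K -> 0 < r ->
  exists m (v : 'I_m -> V), forall u, K u -> exists i, `|v i - u| < r.
Proof.
rewrite compact_cover => cK r_gt0.
have [D _ KD] : finite_subset_cover K (fun x => ball x r) K.
  apply: cK => [x _|u Ku]; first exact: ball_open.
  by exists u => //; apply: ballxx.
pose s := finmap.enum_fset D.
exists (size s), (fun i => nth 0 s i) => u /KD[x xD].
rewrite -ball_normE /= => xu.
have xs : (index x s < size s)%N by rewrite index_mem.
by exists (Ordinal xs); rewrite /= nth_index // -index_mem.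
Qed.

Lemma seq_bounds (T : eqType) (s : seq T) (g h : T -> R) :
  (forall x, 0 < g x) ->
  exists d L, [/\ 0 < d, 0 <= L & forall x, x \in s -> d <= g x /\ h x <= L].
Proof.
move=> g_gt0; elim: s => [|a s [d [L [d_gt0 L_ge0 sdL]]]].
  by exists 1, 0; split.
exists (Num.min d (g a)), (Num.max L (h a)); split.
- by rewrite lt_min d_gt0 g_gt0.
- by rewrite le_max L_ge0.
move=> x; rewrite inE => /orP[/eqP->|/sdL[dx xL]].
  by rewrite ge_min le_max !lexx !orbT.
by rewrite ge_min le_max dx xL.
Qed.

Lemma locally_lipschitz_compact (f : V -> W) (K : set V) :
  locally_lipschitz f -> compact K ->
  exists d L, [/\ 0 < d, 0 <= L & forall y z, K y -> `|y - z| < d ->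
     `|f y - f z| <= L * `|y - z|].
Proof.
move=> f_lip; rewrite compact_cover => cK.
have /choice[rL frL] : forall x, exists rL : R * R, 0 < rL.1 /\ forall y z,
    ball x rL.1 y -> ball x rL.1 z -> `|f y - f z| <= rL.2 * `|y - z|.
  by move=> x; have [r [r_gt0 [L fL]]] := f_lip x; exists (r, L).
have [D _ KD] : finite_subset_cover K (fun x => ball x ((rL x).1 / 2)) K.
  apply: cK => [x _|u Ku]; first exact: ball_open.
  by exists u => //; apply: ballxx; rewrite divr_gt0 ?(frL u).1.
have [d [L [d_gt0 L_ge0 DdL]]] :=
  seq_bounds (finmap.enum_fset D) (fun x => (rL x).2)
    (fun x => divr_gt0 (frL x).1 (ltr0Sn _ 1)).
exists d, L; split => // y z Ky yz.
have [x xD] := KD y Ky; rewrite -ball_normE /= => xy.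
have [dx xL] := DdL x xD.
have r_gt0 := (frL x).1.
apply: le_trans ((frL x).2 y z _ _) _; rewrite -?ball_normE /=.
- lra.
- by have := ler_normD (x - y) (y - z); rewrite addrA subrK; lra.
- by rewrite ler_wpM2r.
Qed.

End Compact.

Section KolmogorovWidth.
Context {R : realType} {V : normedModType R}.

Lemma kolmogorov_width_le_net (K : set V) m (v : 'I_m -> V) r n :
  (forall n, exists E : set V, subspace_dim n E) ->
  (forall u, K u -> exists i, `|v i - u| < r) -> (m <= n)%N ->
  (kolmogorov_width n K <= r%:E)%E.
Proof.
move=> dim_unbounded v_net mn.
have [E [dimE vE]] := subspace_dim_supset dim_unbounded v mn.
apply: le_trans (ereal_inf_lbound _) _; first by exists E.
apply: ge_ereal_sup => _ [u Ku <-]; have [i vi_u] := v_net u Ku.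
apply: le_trans (ereal_inf_lbound _) _; first by exists (v i) => //; apply/vE/span_vec.
by rewrite lee_fin distrC ltW.
Qed.

Variable ip : V -> V -> R.
Hypothesis ip_norm : inner_product_of_norm ip.

Lemma exists_subspace_dim_orth_proj_id (K : set V) m (v : 'I_m -> V) n :
  (forall n, exists E : set V, subspace_dim n E) ->
  K `<=` span v -> (m <= n)%N ->
  exists E, subspace_dim n E /\ forall x, K x -> orth_proj ip E x = x.
Proof.
move=> dim_unbounded Kv mn.
have [_ [[e [indep_e ->]] ve]] := subspace_dim_supset dim_unbounded v mn.
exists (span e); split; first by exists e.
by move=> x Kx; apply/orth_proj_id/ve/Kv.
Qed.

Lemma kolmogorov_width_gt0 n (K : set V) (u : 'I_n.+1 -> V) :
  lin_indep u -> (forall i, K (u i)) ->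
  exists2 eta : R, 0 < eta & (eta%:E <= kolmogorov_width n K)%E.
Proof.
move=> indep_u Ku; have [eta eta_gt0 far] := lin_indep_far_from_span ip_norm indep_u.
exists eta => //; apply: le_ereal_inf_tmp => _ [E [e [_ ->]] <-].
have [i ui_far] := far e.
apply: le_trans (ereal_sup_ubound _); last by exists (u i).
by apply: le_ereal_inf_tmp => _ [v ev <-]; rewrite lee_fin ui_far.
Qed.

Lemma kolmogorov_width_lt n (K : set V) a : (kolmogorov_width n K < a)%E ->
  exists e : 'I_n -> V, lin_indep e /\
    forall x, K x -> ((`|x - orth_proj ip (span e) x|)%:E < a)%E.
Proof.
move=> /ereal_inf_lt[_ [E [e [indep_e ->]] <-] dev_lt].
exists e; split => // x Kx; apply: le_lt_trans dev_lt.
by rewrite -dist_span_orth_proj //; apply: ereal_sup_ubound; exists x.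
Qed.

End KolmogorovWidth.

Theorem lemma4p8 (R : realType) (H : completeNormedModType R)
  (ip : H -> H -> R) (Y : completeNormedModType R)
  (f : H -> Y) (K : set H) :
  inner_product_of_norm ip ->
  (forall n : nat, exists E : set H, subspace_dim n E) ->
  locally_lipschitz f ->
  compact K ->
  exists (n0 : nat) (c : R), 0 <= c /\
    forall n : nat, (n0 <= n)%N ->
      exists E : set H, subspace_dim n E /\
        (ereal_sup [set (`|f x - f (orth_proj ip E x)|)%:E | x in K]
          <= c%:E * kolmogorov_width n K)%E.
Proof.
move=> ip_norm dim_unbounded f_lip cK.
have [[m [v Kv]]|K_inf] := pselect (exists m (v : 'I_m -> H), K `<=` span v).
  exists m, 0; split => // n mn.
  have [E [dimE PE]] := exists_subspace_dim_orth_proj_id ip_norm dim_unbounded Kv mn.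
  exists E; split => //; rewrite mul0e; apply: ge_ereal_sup => _ [x Kx <-].
  by rewrite PE // subrr normr0.
have [d [L [d_gt0 L_ge0 f_lipK]]] := locally_lipschitz_compact f_lip cK.
have [m [v v_net]] := compact_finite_net cK (divr_gt0 d_gt0 (ltr0Sn _ 1)).
exists m, (2 * L); split => [|n mn]; first by rewrite mulr_ge0.
have [u [indep_u Ku]] := lin_indep_in K_inf n.+1.
have [eta eta_gt0 eta_le] := kolmogorov_width_gt0 ip_norm indep_u Ku.
have w_le := kolmogorov_width_le_net dim_unbounded v_net mn.
move: eta_le w_le; case wE : (kolmogorov_width n K) => [w| |] //.
rewrite !lee_fin => eta_le w_le.
have w_lt : (kolmogorov_width n K < (2 * w)%:E)%E by rewrite wE lte_fin; lra.
have [e [indep_e Pe]] := kolmogorov_width_lt ip_norm w_lt.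
exists (span e); split; first by exists e.
rewrite -EFinM; apply: ge_ereal_sup => _ [x Kx <-]; rewrite lee_fin.
have := Pe x Kx; rewrite lte_fin => Px_near.
apply: le_trans (f_lipK _ _ Kx _) _; first lra.
nra.
Qed.
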